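(* In the setting of the context, $f(a,b)=\rho(h_{ab})-\rho(h_a)-\rho(h_b)$ for all $a,b\in A$.
   Context: Conventions: $[x,y]=x^{-1}y^{-1}xy$; $G$ acts on $V$ on the right, $[v,g]=-v+vg$; $[X,Y]$ is the subgroup generated by commutators, $[X,Y,Z]=[[X,Y],Z]$; $A^\#=A\setminus\{1\}$. Setting: $G=\langle A,B\rangle$ is an abstract rank one group with unipotent subgroups $A,B$ (distinct nilpotent; for each $a\in A^\#$ some $b(a)\in B^\#$ with $B^a=A^{b(a)}$, and vice versa). $\mu_a=b(a^{-1})ab(a)^{-1}$, $H=\langle\mu_a\mu_c:a,c\in A^\#\rangle$. $V$ is a $\mathbb{Z}G$-module with $[V,A,A,A]=0$, $[V,G,G,G]\neq0$, $[V,G]=V$, $C_V(G)=0$. $A_0=C_A([V,A])\cap C_A(V/C_V(A))\neq1$. Fix $e\in A_0^\#$ (with $e=a^2$ for some $a\in A$ if $V$ has exponent 2 and $A$ is non-abelian), $\mu=\mu_{e^{-1}}$, $h_a=\mu\mu_a$ for $a\in A^\#$, $h_1=0$; $\rho(h)$ = restriction of $h\in H$ to $C_V(A)$, $\rho(h_1)=0$. $f:A\times A\to\mathrm{End}(C_V(A))$ is defined by $vf(a,b)=[v\mu,a,b]$ for $v\in C_V(A)$. *)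

(* V is a mathcomp zmodType; the (possibly infinite) group G
   is an explicit record, since MathComp only has finite groups. *)
From mathcomp Require Import all_boot all_algebra.
From Stdlib Require Import ClassicalEpsilon.
Set Implicit Arguments. Unset Strict Implicit. Unset Printing Implicit Defensive.
Import GRing.Theory.
Local Open Scope ring_scope.

Record group := Group {
  gcar :> Type;
  gmul : gcar -> gcar -> gcar;
  ginv : gcar -> gcar;
  gone : gcar;
  gmulA : forall x y z, gmul x (gmul y z) = gmul (gmul x y) z;
  gmul1 : forall x, gmul gone x = x;
  gmulV : forall x, gmul (ginv x) x = gone }.

Section GroupDefs.
Variable G : group.

Definition gcomm (x y : G) : G :=
  gmul (gmul (ginv x) (ginv y)) (gmul x y).

Definition is_subgroup (S : G -> Prop) : Prop :=
  S (gone G) /\ (forall x y, S x -> S y -> S (gmul x y)) /\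
  (forall x, S x -> S (ginv x)).

Inductive gen_grp (S : G -> Prop) : G -> Prop :=
  | gen_in x : S x -> gen_grp S x
  | gen_one : gen_grp S (gone G)
  | gen_mul x y : gen_grp S x -> gen_grp S y -> gen_grp S (gmul x y)
  | gen_inv x : gen_grp S x -> gen_grp S (ginv x).

Definition comm_grp (X Y : G -> Prop) : G -> Prop :=
  gen_grp (fun z => exists x y, X x /\ Y y /\ z = gcomm x y).

(* lower central series gamma_1(A) = A, gamma_{n+1}(A) = [gamma_n(A), A] *)
Fixpoint lower_central (A : G -> Prop) (n : nat) : G -> Prop :=
  match n with
  | 0 => A
  | n'.+1 => comm_grp (lower_central A n') A
  end.

Definition nilpotent_grp (A : G -> Prop) : Prop :=
  exists n, forall x, lower_central A n x -> x = gone G.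

Definition abelian_grp (A : G -> Prop) : Prop :=
  forall x y, A x -> A y -> gmul x y = gmul y x.

Definition is_gmodule (V : zmodType) (act : V -> G -> V) : Prop :=
  (forall g (v w : V), act (v + w) g = act v g + act w g) /\
  (forall v, act v (gone G) = v) /\
  (forall v g h, act v (gmul g h) = act (act v g) h).

Section Module.
Variables (V : zmodType) (act : V -> G -> V).

Definition vcomm (v : V) (g : G) : V := - v + act v g.

Inductive gen_add (S : V -> Prop) : V -> Prop :=
  | gadd_in v : S v -> gen_add S v
  | gadd_zero : gen_add S 0
  | gadd_add v w : gen_add S v -> gen_add S w -> gen_add S (v + w)
  | gadd_opp v : gen_add S v -> gen_add S (- v).

Definition Vcomm (X : V -> Prop) (Y : G -> Prop) : V -> Prop :=
  gen_add (fun w => exists x y, X x /\ Y y /\ w = vcomm x y).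

Definition Vall : V -> Prop := fun _ => True.
Definition Gall : G -> Prop := fun _ => True.

Definition CV (Y : G -> Prop) (v : V) : Prop := forall y, Y y -> act v y = v.

(* A_0 = C_A([V,A]) cap C_A(V/C_V(A)) *)
Definition A0 (A : G -> Prop) (a : G) : Prop :=
  A a /\ (forall w, Vcomm Vall A w -> act w a = w) /\
  (forall v, CV A (vcomm v a)).

Definition mu_ (bf : G -> G) (a : G) : G :=
  gmul (gmul (bf (ginv a)) a) (ginv (bf a)).

(* v rho(h_x), with h_x = mu mu_x, mu = mu_{e^-1}, and rho(h_1) = 0 *)
Definition rho_h (bf : G -> G) (e : G) (x : G) (v : V) : V :=
  if excluded_middle_informative (x = gone G) then 0
  else act v (gmul (mu_ bf (ginv e)) (mu_ bf x)).

Definition f_ab (bf : G -> G) (e : G) (a b : G) (v : V) : V :=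
  vcomm (vcomm (act v (mu_ bf (ginv e))) a) b.

End Module.
End GroupDefs.

From mathcomp Require Import all_boot all_algebra.
From Stdlib Require Import ClassicalEpsilon.
Set Implicit Arguments. Unset Strict Implicit. Unset Printing Implicit Defensive.
Import GRing.Theory.
Local Open Scope ring_scope.

(* Put w = v mu, which lies in C_V(B), so that rho(h_x) v = w mu_x.  Since
   mu_x b(x) = b(x^-1) x, we get [w,x] = rho(h_x) v - w + [rho(h_x) v, b(x)].
   The conjugate e' = mu_e e mu_e^-1 is a nontrivial element of B centralising
   [V,B] (as e centralises [V,A]), so [w,x] and rho(h_x) v agree modulo the
   vectors fixed by e'.  As [w,a,b] = [w,ab] - [w,a] - [w,b], the difference of
   the two sides is fixed by e'; it is fixed by A because [V,A,A,A] = 0 and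
   rho(h_x) v is in C_V(A).  A vector fixed by A and by a nontrivial element of
   B is fixed by <A,B> = G, hence vanishes. *)

Section GroupFacts.
Variable G : group.
Implicit Types (x y g h : G) (S : G -> Prop).

Lemma gmulVr x : gmul x (ginv x) = gone G.
Proof.
rewrite -{1}(gmul1 (gmul x (ginv x))) -{1}(gmulV (ginv x)).
by rewrite -gmulA (gmulA (ginv x) x) gmulV gmul1 gmulV.
Qed.

Lemma gmul1r x : gmul x (gone G) = x.
Proof. by rewrite -(gmulV x) gmulA gmulVr gmul1. Qed.

Lemma gmulVK x y : gmul (gmul x (ginv y)) y = x.
Proof. by rewrite -gmulA gmulV gmul1r. Qed.

Lemma ginv_uniq x y : gmul x y = gone G -> ginv x = y.
Proof. by move=> xy1; rewrite -(gmul1r (ginv x)) -xy1 gmulA gmulV gmul1. Qed.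

Lemma ginvK x : ginv (ginv x) = x.
Proof. by apply: ginv_uniq; rewrite gmulV. Qed.

Lemma ginvM x y : ginv (gmul x y) = gmul (ginv y) (ginv x).
Proof. by apply: ginv_uniq; rewrite !gmulA -(gmulA x) gmulVr gmul1r gmulVr. Qed.

Lemma ginv1 : ginv (gone G) = gone G.
Proof. by apply: ginv_uniq; rewrite gmul1. Qed.

Lemma ginv_neq1 x : x <> gone G -> ginv x <> gone G.
Proof. by move=> x1 /(congr1 (@ginv G)); rewrite ginvK ginv1. Qed.

Definition gconj g x : G := gmul (gmul g x) (ginv g).

Lemma gconjM g h x : gconj (gmul g h) x = gconj g (gconj h x).
Proof. by rewrite /gconj ginvM !gmulA. Qed.

Lemma gconjK g x : gconj (ginv g) (gconj g x) = x.
Proof. by rewrite /gconj ginvK !gmulA gmulV gmul1 gmulVK. Qed.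

Lemma gconjVK g x : gconj g (gconj (ginv g) x) = x.
Proof. by rewrite -{1}(ginvK g) gconjK. Qed.

Lemma gconj_eq1 g x : gconj g x = gone G -> x = gone G.
Proof. by move=> gx1; rewrite -(gconjK g x) gx1 /gconj gmul1r gmulVr. Qed.

Lemma subgroupM S x y : is_subgroup S -> S x -> S y -> S (gmul x y).
Proof. by case=> _ [+ _]; apply. Qed.

Lemma subgroupV S x : is_subgroup S -> S x -> S (ginv x).
Proof. by case=> _ [_]; apply. Qed.

Lemma subgroup_gconj S g x : is_subgroup S -> S g -> S x -> S (gconj g x).
Proof. by case=> _ [Smul Sinv] Sg Sx; apply/Smul/Sinv/Sg/Smul. Qed.

Lemma ginv_mu (bf : G -> G) x : ginv (mu_ bf x) = mu_ bf (ginv x).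
Proof. by rewrite /mu_ !ginvM !ginvK !gmulA. Qed.

Lemma mu_bfK (bf : G -> G) x : gmul (mu_ bf x) (bf x) = gmul (bf (ginv x)) x.
Proof. by rewrite /mu_ gmulVK. Qed.

Lemma gconj_mu (bf : G -> G) x y :
  gconj (mu_ bf x) y = gconj (bf (ginv x)) (gconj x (gconj (ginv (bf x)) y)).
Proof. by rewrite /mu_ -!gconjM. Qed.

End GroupFacts.

Section RankOneGroup.
Variables (G : group) (A B : G -> Prop) (bf : G -> G).
Hypotheses (hA : is_subgroup A) (hB : is_subgroup B).
Hypothesis hbf : forall a, A a -> a <> gone G ->
  B (bf a) /\ bf a <> gone G /\
  (forall y, B (gconj a y) <-> A (gconj (bf a) y)).

Lemma mu_conj_A x a : A x -> x <> gone G -> A a -> B (gconj (mu_ bf x) a).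
Proof.
move=> Ax x1 Aa; have [Bbxi _] := hbf (subgroupV hA Ax) (ginv_neq1 x1).
have [_ [_ hx]] := hbf Ax x1.
by rewrite gconj_mu; apply: subgroup_gconj hB Bbxi _; apply/hx; rewrite gconjVK.
Qed.

Lemma mu_conj_B x b : A x -> x <> gone G -> B b -> A (gconj (mu_ bf x) b).
Proof.
move=> Ax x1 Bb; have [_ [_ hxi]] := hbf (subgroupV hA Ax) (ginv_neq1 x1).
have [Bbx _] := hbf Ax x1.
have Bbx_inv := subgroupV hB Bbx.
by rewrite gconj_mu; apply/hxi; rewrite gconjK; apply: subgroup_gconj.
Qed.

End RankOneGroup.

Lemma subrACA (V : zmodType) (x y z t : V) : x - y - (z - t) = x - z - (y - t).
Proof. by rewrite !opprB addrACA [RHS]addrACA (addrC (- z)). Qed.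

Section GModule.
Variables (G : group) (V : zmodType) (act : V -> G -> V).
Hypothesis hV : is_gmodule act.
Implicit Types (v w : V) (g x y : G).

Lemma actD g v w : act (v + w) g = act v g + act w g.
Proof. by case: hV. Qed.

Lemma act1 v : act v (gone G) = v.
Proof. by case: hV => _ []. Qed.

Lemma actM v g h : act v (gmul g h) = act (act v g) h.
Proof. by case: hV => _ []. Qed.

Lemma act0 g : act 0 g = 0.
Proof. by apply: (addrI (act 0 g)); rewrite -actD !addr0. Qed.

Lemma actN g v : act (- v) g = - act v g.
Proof. by apply: (addrI (act v g)); rewrite -actD !subrr act0. Qed.

Lemma actK g v : act (act v g) (ginv g) = v.
Proof. by rewrite -actM gmulVr act1. Qed.

Lemma fix_actD g v w : act v g = v -> act w g = w -> act (v + w) g = v + w.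
Proof. by rewrite actD => -> ->. Qed.

Lemma fix_actB g v w : act v g = v -> act w g = w -> act (v - w) g = v - w.
Proof. by rewrite actD actN => -> ->. Qed.

Lemma fix_actM v g h : act v g = v -> act v h = v -> act v (gmul g h) = v.
Proof. by rewrite actM => -> ->. Qed.

Lemma fix_actV v g : act v g = v -> act v (ginv g) = v.
Proof. by move=> vg; rewrite -{1}vg actK. Qed.

Lemma fix_gconj v g x : act v g = v -> act v x = v -> act v (gconj g x) = v.
Proof. by move=> vg vx; rewrite !fix_actM ?fix_actV. Qed.

Lemma CV_gen_grp S v : CV act S v -> CV act (gen_grp S) v.
Proof.
move=> vS y; elim=> [x /vS | | x z _ vx _ vz | x _ vx].
- by [].
- exact: act1.
- exact: fix_actM.
- exact: fix_actV.
Qed.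

Lemma fix_gen_add S g t : (forall s, S s -> act s g = s) -> gen_add S t -> act t g = t.
Proof.
move=> Sg; elim=> [s /Sg | | s u _ sg _ ug | s _ sg].
- by [].
- exact: act0.
- exact: fix_actD.
- by rewrite actN sg.
Qed.

Lemma vcommJ v y g : act (vcomm act v y) g = vcomm act (act v g) (gconj (ginv g) y).
Proof.
by rewrite /vcomm actD actN -!actM /gconj ginvK !gmulA gmulVr gmul1.
Qed.

Lemma CV_actJ X Y g v :
  (forall y, Y y -> X (gconj g y)) -> CV act X v -> CV act Y (act v g).
Proof.
move=> XY vX y Yy.
by rewrite -actM -(gmulVK (gmul g y) g) actM (vX _ (XY _ Yy)).
Qed.

Lemma vcomm_vcommM v a b :
  vcomm act (vcomm act v a) b =
  vcomm act v (gmul a b) - vcomm act v a - vcomm act v b.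
Proof.
rewrite /vcomm actD actN actM !opprD !opprK [- v + _]addrC -!addrA addKr.
by rewrite addrCA (addrC (- act v b)) !addrA; congr (_ - _); rewrite addrC addrA.
Qed.

End GModule.

Section RankOneModule.
Variables (G : group) (A B : G -> Prop) (V : zmodType) (act : V -> G -> V).
Hypothesis hgen : forall x : G, gen_grp (fun y => A y \/ B y) x.
Hypothesis hab : forall b, B b -> b <> gone G ->
  exists a, A a /\ a <> gone G /\ (forall y, A (gconj b y) <-> B (gconj a y)).
Hypothesis hV : is_gmodule act.
Hypothesis hCVG : forall v, CV act (@Gall G) v -> v = 0.

(* z is fixed by A^b = B^a for the a in A given by [hab], hence by B. *)
Lemma CV_A_fix_eq0 z b : CV act A z -> B b -> b <> gone G -> act z b = z -> z = 0.
Proof.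
move=> zA Bb b1 zb; have [a [Aa [_ hba]]] := hab Bb b1.
have zB : CV act B z.
  move=> y By; rewrite -(gconjVK a y); apply: fix_gconj => //; first exact: zA.
  rewrite -(gconjK b (gconj (ginv a) y)); apply: fix_gconj => //.
    exact: fix_actV.
  by apply/zA/hba; rewrite gconjVK.
apply: hCVG => g _; apply: (CV_gen_grp hV) (hgen g).
by move=> y [/zA | /zB].
Qed.

End RankOneModule.

Section Proposition.
Variables (G : group) (A B : G -> Prop) (bf : G -> G).
Variables (V : zmodType) (act : V -> G -> V) (e : G).
Hypotheses (hA : is_subgroup A) (hB : is_subgroup B).
Hypothesis hbf : forall a, A a -> a <> gone G ->
  B (bf a) /\ bf a <> gone G /\
  (forall y, B (gconj a y) <-> A (gconj (bf a) y)).
Hypothesis hV : is_gmodule act.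
Hypothesis hVAAA :
  forall v, Vcomm act (Vcomm act (Vcomm act (@Vall V) A) A) A v -> v = 0.
Hypotheses (he : A0 act A e) (he1 : e <> gone G).
Variable v : V.
Hypothesis vA : CV act A v.

Let Ae : A e. Proof. by case: he. Qed.
Let w := act v (mu_ bf (ginv e)).
Let e' := gconj (mu_ bf e) e.
Let rho x := rho_h act bf e x v.

Lemma CV_B_act_mu : CV act B w.
Proof.
apply: (CV_actJ hV) vA => y By.
exact: (mu_conj_B hA hB hbf (subgroupV hA Ae) (ginv_neq1 he1) By).
Qed.

Lemma rho_hE x : x <> gone G -> rho x = act w (mu_ bf x).
Proof.
move=> x1; rewrite /rho /rho_h.
by destruct excluded_middle_informative; rewrite ?(actM hV).
Qed.

Lemma rho_h1 : rho (gone G) = 0.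
Proof. by rewrite /rho /rho_h; destruct excluded_middle_informative. Qed.

Lemma CV_A_rho_h x : A x -> CV act A (rho x).
Proof.
move=> Ax; have [-> | x1] := excluded_middle_informative (x = gone G).
  by rewrite rho_h1 => y _; apply: act0.
rewrite rho_hE //; apply: (CV_actJ hV) CV_B_act_mu => y Ay.
exact: (mu_conj_A hA hB hbf Ax x1 Ay).
Qed.

Lemma B_conj_e : B e'.
Proof. exact: (mu_conj_A hA hB hbf Ae he1 Ae). Qed.

Lemma conj_e_neq1 : e' <> gone G.
Proof. by move/gconj_eq1. Qed.

Lemma fix_conj_e_VB t : Vcomm act (@Vall V) B t -> act t e' = t.
Proof.
apply: (fix_gen_add hV) => _ [x [y [_ [By ->]]]].
have Ay : A (gconj (ginv (mu_ bf e)) y).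
  rewrite ginv_mu; exact: (mu_conj_B hA hB hbf (subgroupV hA Ae) (ginv_neq1 he1) By).
rewrite /e' /gconj 2!(actM hV) (vcommJ hV) (proj1 (proj2 he)).
  by rewrite -(vcommJ hV) (actK hV).
by apply: gadd_in; exists (act x (mu_ bf e)), (gconj (ginv (mu_ bf e)) y).
Qed.

Lemma vcomm_rho_fix x : A x ->
  act (vcomm act w x - rho x) e' = vcomm act w x - rho x.
Proof.
move=> Ax; have [-> | x1] := excluded_middle_informative (x = gone G).
  by rewrite rho_h1 /vcomm (act1 hV) addNr subrr (act0 hV).
have [Bbx _] := hbf Ax x1.
have [Bbxi _] := hbf (subgroupV hA Ax) (ginv_neq1 x1).
have wx : act w x = act (rho x) (bf x).
  by rewrite rho_hE // -(actM hV) mu_bfK (actM hV) (CV_B_act_mu Bbxi).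
have -> : vcomm act w x - rho x = vcomm act (rho x) (bf x) - w.
  by rewrite /vcomm wx addrAC (addrC (- w)) addrAC.
apply: (fix_actB hV); last exact: CV_B_act_mu B_conj_e.
by apply: fix_conj_e_VB; apply: gadd_in; exists (rho x), (bf x).
Qed.

Lemma CV_A_f_ab a b : A a -> A b -> CV act A (f_ab act bf e a b v).
Proof.
move=> Aa Ab y Ay; apply/eqP; rewrite -subr_eq0 addrC; apply/eqP; apply: hVAAA.
apply: gadd_in; exists (f_ab act bf e a b v), y; split=> //.
apply: gadd_in; exists (vcomm act w a), b; split=> //.
by apply: gadd_in; exists w, a.
Qed.

Let D a b := f_ab act bf e a b v - (rho (gmul a b) - rho a - rho b).

Lemma CV_A_f_ab_rho a b : A a -> A b -> CV act A (D a b).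
Proof.
move=> Aa Ab y Ay; have Aab := subgroupM hA Aa Ab.
by rewrite !(fix_actB hV) ?CV_A_f_ab ?CV_A_rho_h.
Qed.

Lemma fix_conj_e_f_ab_rho a b : A a -> A b -> act (D a b) e' = D a b.
Proof.
move=> Aa Ab; have Aab := subgroupM hA Aa Ab.
rewrite /D /f_ab -/w (vcomm_vcommM hV) subrACA (subrACA (vcomm act w _)).
apply: (fix_actB hV); first apply: (fix_actB hV).
all: exact: vcomm_rho_fix.
Qed.

End Proposition.

Theorem proposition4p4
  (G : group) (A B : G -> Prop) (bf : G -> G)
  (V : zmodType) (act : V -> G -> V) (e : G)
  (hA : is_subgroup A) (hB : is_subgroup B)
  (nA : nilpotent_grp A) (nB : nilpotent_grp B)
  (hAB : ~ (forall x, A x <-> B x))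
  (hgen : forall x : G, gen_grp (fun y => A y \/ B y) x)
  (hbf : forall a, A a -> a <> gone G ->
     B (bf a) /\ bf a <> gone G /\
     (forall y, B (gmul (gmul a y) (ginv a)) <->
                A (gmul (gmul (bf a) y) (ginv (bf a)))))
  (hab : forall b, B b -> b <> gone G ->
     exists a, A a /\ a <> gone G /\
     (forall y, A (gmul (gmul b y) (ginv b)) <->
                B (gmul (gmul a y) (ginv a))))
  (hV : is_gmodule act)
  (hVAAA : forall v, Vcomm act (Vcomm act (Vcomm act (@Vall V) A) A) A v -> v = 0)
  (hVGGG : exists v, Vcomm act (Vcomm act (Vcomm act (@Vall V) (@Gall G)) (@Gall G)) (@Gall G) v
                     /\ v <> 0)
  (hVG : forall v, Vcomm act (@Vall V) (@Gall G) v)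
  (hCVG : forall v, CV act (@Gall G) v -> v = 0)
  (hA0 : exists a, A0 act A a /\ a <> gone G)
  (he : A0 act A e) (he1 : e <> gone G)
  (he2 : (forall v : V, v + v = 0) -> ~ abelian_grp A ->
         exists a, A a /\ e = gmul a a) :
  forall a b, A a -> A b -> forall v, CV act A v ->
    f_ab act bf e a b v =
    rho_h act bf e (gmul a b) v - rho_h act bf e a v - rho_h act bf e b v.
Proof.
move=> a b Aa Ab v vA; apply/eqP; rewrite -subr_eq0; apply/eqP.
apply: (CV_A_fix_eq0 hgen hab hV hCVG _ (B_conj_e hA hB hbf he he1) (conj_e_neq1 he1)).
- exact: (CV_A_f_ab_rho hA hB hbf hV hVAAA he he1 vA Aa Ab).
- exact: (fix_conj_e_f_ab_rho hA hB hbf hV he he1 vA Aa Ab).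
Qed.
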